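(* Assume $\overline{P}^d\ge\overline{P}^d_e$ replaced by $\overline{P}^d_e$ and $\overline{P}^c$ by $\overline{P}^c_e$ is allowed (this does not change $\mathcal{P}^{0\text{-}1}$). For every $t\in\{1,\ldots,T\}$ and $\overline{\tau}\in\{0,\ldots,T-t\}$, every $(p^d,p^c,s,u)\in\mathcal{P}^{0\text{-}1}$ satisfies $$\sum_{\tau=0}^{\overline{\tau}}p^c_{t+\tau}+\sum_{\tau=0}^{\overline{\tau}}\rho^c(t,\tau,\overline{\tau})(1-u_{t+\tau})\le\sum_{\tau=0}^{\overline{\tau}}c(t,\tau)$$ and $$\sum_{\tau=0}^{\overline{\tau}}p^d_{t+\tau}+\sum_{\tau=0}^{\overline{\tau}}\rho^d(t,\tau,\overline{\tau})\,u_{t+\tau}\le\sum_{\tau=0}^{\overline{\tau}}d(t,\tau).$$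
   Context: Let $T\ge1$, $\Delta>0$, $\eta_c,\eta_d\in(0,1]$, $\overline{P}^d,\overline{P}^c>0$, $\underline{S}<\overline{S}$, $s_0\in[\underline{S},\overline{S}]$. $\mathcal{P}^{0\text{-}1}$ is the set of $(p^d,p^c,s)\in(\mathbb{R}^T_{\ge0})^3$, $u\in\{0,1\}^T$ with $p^d_t\le\overline{P}^d(1-u_t)$, $p^c_t\le\overline{P}^cu_t$, $\underline{S}\le s_t\le\overline{S}$, $s_t=s_{t-1}+\Delta(\eta_cp^c_t-p^d_t/\eta_d)$ for $t=1,\ldots,T$. Let $\overline{P}^d_e=\min\{\overline{P}^d,\eta_d(\overline{S}-\underline{S})/\Delta\}$, $\overline{P}^c_e=\min\{\overline{P}^c,(\overline{S}-\underline{S})/(\Delta\eta_c)\}$, $[x]^+=\max\{x,0\}$. Set $\underline{s}_0(0)=\overline{s}_0(0)=s_0$, $\underline{s}_0(t)=\max\{\underline{s}_0(t-1)-\Delta\overline{P}^d_e/\eta_d,\underline{S}\}$, $\overline{s}_0(t)=\min\{\overline{s}_0(t-1)+\Delta\eta_c\overline{P}^c_e,\overline{S}\}$ for $t=1,\ldots,T-1$. For $t=1..T$, $\overline{\tau}=0..T-t$: $c(t,\overline{\tau})=\min\{\overline{P}^c_e,[(\overline{S}-\underline{s}_0(t-1))/(\Delta\eta_c)-\overline{\tau}\overline{P}^c_e]^+\}$, $d(t,\overline{\tau})=\min\{\overline{P}^d_e,[(\overline{s}_0(t-1)-\underline{S})\eta_d/\Delta-\overline{\tau}\overline{P}^d_e]^+\}$.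 For $\tau=0..T-2$: $\overline{c}(\tau)=\min\{\overline{P}^c_e,[(\overline{S}-\underline{S})/(\Delta\eta_c)-\tau\overline{P}^c_e]^+\}$, $\overline{d}(\tau)=\min\{\overline{P}^d_e,[(\overline{S}-\underline{S})\eta_d/\Delta-\tau\overline{P}^d_e]^+\}$. $\overline{P}^c_e(t)=c(t,0)$, $\overline{P}^d_e(t)=d(t,0)$. For $\tau=0,\ldots,\overline{\tau}$: $\rho^c(t,\tau,\overline{\tau})=\max\{-\overline{P}^d_e(t+\tau)/(\eta_d\eta_c),\sum_{j=\tau}^{\overline{\tau}}c(t,j)-\sum_{j=0}^{\overline{\tau}-\tau-1}\overline{c}(j)\}$, $\rho^d(t,\tau,\overline{\tau})=\max\{-\eta_d\eta_c\overline{P}^c_e(t+\tau),\sum_{j=\tau}^{\overline{\tau}}d(t,j)-\sum_{j=0}^{\overline{\tau}-\tau-1}\overline{d}(j)\}$ (empty sums $=0$). *)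

From HB Require Import structures.
From mathcomp Require Import all_boot all_order all_algebra.
Set Implicit Arguments. Unset Strict Implicit. Unset Printing Implicit Defensive.
Import Order.TTheory GRing.Theory Num.Theory.
Local Open Scope ring_scope.

Definition pospart {R : realFieldType} (x : R) : R := Num.max x 0.

Definition Pde {R : realFieldType} (Delta etad Pd Smin Smax : R) : R :=
  Num.min Pd (etad * (Smax - Smin) / Delta).
Definition Pce {R : realFieldType} (Delta etac Pc Smin Smax : R) : R :=
  Num.min Pc ((Smax - Smin) / (Delta * etac)).

Fixpoint slow0 {R : realFieldType} (Delta etad Pd Smin Smax s0 : R) (t : nat) : R :=
  match t with
  | 0 => s0
  | t'.+1 => Num.max (slow0 Delta etad Pd Smin Smax s0 t'
                      - Delta * Pde Delta etad Pd Smin Smax / etad) Smin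
  end.
Fixpoint sup0 {R : realFieldType} (Delta etac Pc Smin Smax s0 : R) (t : nat) : R :=
  match t with
  | 0 => s0
  | t'.+1 => Num.min (sup0 Delta etac Pc Smin Smax s0 t'
                      + Delta * etac * Pce Delta etac Pc Smin Smax) Smax
  end.

Definition cc {R : realFieldType} (Delta etac etad Pc Pd Smin Smax s0 : R)
    (t taub : nat) : R :=
  Num.min (Pce Delta etac Pc Smin Smax)
    (pospart ((Smax - slow0 Delta etad Pd Smin Smax s0 t.-1) / (Delta * etac)
              - taub%:R * Pce Delta etac Pc Smin Smax)).
Definition dd {R : realFieldType} (Delta etac etad Pc Pd Smin Smax s0 : R)
    (t taub : nat) : R :=
  Num.min (Pde Delta etad Pd Smin Smax)
    (pospart ((sup0 Delta etac Pc Smin Smax s0 t.-1 - Smin) * etad / Delta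
              - taub%:R * Pde Delta etad Pd Smin Smax)).

Definition cbar {R : realFieldType} (Delta etac Pc Smin Smax : R) (tau : nat) : R :=
  Num.min (Pce Delta etac Pc Smin Smax)
    (pospart ((Smax - Smin) / (Delta * etac) - tau%:R * Pce Delta etac Pc Smin Smax)).
Definition dbar {R : realFieldType} (Delta etad Pd Smin Smax : R) (tau : nat) : R :=
  Num.min (Pde Delta etad Pd Smin Smax)
    (pospart ((Smax - Smin) * etad / Delta - tau%:R * Pde Delta etad Pd Smin Smax)).

(* rho^c(t,tau,taubar), rho^d(t,tau,taubar); used for tau <= taubar.
   \overline{P}^d_e(t') = d(t',0), \overline{P}^c_e(t') = c(t',0).
   sum_{j=0}^{taub-tau-1} is \sum_(0 <= j < taub - tau) (empty when tau = taub). *)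
Definition rhoc {R : realFieldType} (Delta etac etad Pc Pd Smin Smax s0 : R)
    (t tau taub : nat) : R :=
  Num.max (- dd Delta etac etad Pc Pd Smin Smax s0 (t + tau) 0 / (etad * etac))
    (\sum_(tau <= j < taub.+1) cc Delta etac etad Pc Pd Smin Smax s0 t j
     - \sum_(0 <= j < taub - tau) cbar Delta etac Pc Smin Smax j).
Definition rhod {R : realFieldType} (Delta etac etad Pc Pd Smin Smax s0 : R)
    (t tau taub : nat) : R :=
  Num.max (- (etad * etac) * cc Delta etac etad Pc Pd Smin Smax s0 (t + tau) 0)
    (\sum_(tau <= j < taub.+1) dd Delta etac etad Pc Pd Smin Smax s0 t j
     - \sum_(0 <= j < taub - tau) dbar Delta etad Pd Smin Smax j).

(* membership in P^{0-1}; sequences indexed by nat, only t = 1..T matter,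
   s 0 is the initial state s_0. u_t in {0,1} is a bool. *)
Definition inP01 {R : realFieldType} (T : nat) (Delta etac etad Pc Pd Smin Smax s0 : R)
    (pd pc s : nat -> R) (u : nat -> bool) : Prop :=
  s 0%N = s0 /\
  forall t : nat, (1 <= t <= T)%N ->
    0 <= pd t /\ 0 <= pc t /\ 0 <= s t /\
    pd t <= Pd * (1 - (u t)%:R) /\ pc t <= Pc * (u t)%:R /\
    Smin <= s t <= Smax /\
    s t = s t.-1 + Delta * (etac * pc t - pd t / etad).

From HB Require Import structures.
From mathcomp Require Import all_boot all_order all_algebra.
From mathcomp Require Import ring lra zify.
Import Order.TTheory GRing.Theory Num.Theory.
Local Open Scope ring_scope.

(* Call the effective charge of a period its actual charge when the unit charges, and the
   lower bound [- d(k, 0) / (etad * etac)] on its (non-positive) scaled change of state when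
   it discharges.  It is at most [Pc_e] and at most the rise of the scaled state of charge,
   so a window of length [l] absorbs at most [min (l * Pc_e) (Smax - Smin)], and a prefix
   at most [min (l * Pc_e) A] with [A] the headroom above the lowest reachable state.  The
   [c(t, j)] split [A] into chunks of [Pc_e], so their partial sums are exactly these
   prefix bounds.  Summing [max (effective charge) (rho bound)] over the window then goes
   by induction on the prefix: where the rho bound wins, it fills the prefix bound up to
   what the rest of the window can still absorb, and rho bounds of earlier periods only
   grow when the window is cut there.  Discharging is the mirror image. *)

Lemma min_increment_le {R : realDomainType} (x y d A E : R) :
  0 <= d -> y <= x -> A <= E ->
  Num.min (x + d) A - Num.min x A <= Num.min (y + d) E - Num.min y E.
Proof.
move=> d_ge0 yx AE; case: (leP x A) => h1; case: (leP (x + d) A) => h2;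
  case: (leP y E) => h3; case: (leP (y + d) E) => h4; lra.
Qed.

Section CappedShares.

Variables (R : realFieldType) (P : R).
Hypothesis P_ge0 : 0 <= P.

Definition capped_share (B : R) (j : nat) : R := Num.min P (pospart (B - j%:R * P)).

(* [capped_share Pc_e A] and [capped_share Pc_e E] are [c(t, .)] and [cbar] for [A], [E] the
   headrooms in their definitions; [share_gap Pc_e A E taub.+1 tau] is then the second
   argument of [rho^c(t, tau, taub)], and likewise for discharging. *)
Definition share_gap (A E : R) (m tau : nat) : R :=
  \sum_(tau <= j < m) capped_share A j - \sum_(0 <= j < m.-1 - tau) capped_share E j.

Lemma min_add_capped_share (x B : R) :
  Num.min x B + Num.min P (pospart (B - x)) = Num.min (x + P) B.
Proof.
rewrite /pospart; case: (leP x B) => hxB.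
  rewrite (max_l (_ : 0 <= B - x)) ?subr_ge0 //.
  by have := P_ge0; case: (leP P (B - x)); case: (leP (x + P) B); lra.
rewrite (max_r (_ : B - x <= 0)) ?subr_le0 ?ltW // (min_r P_ge0).
by have := P_ge0; case: (leP (x + P) B); lra.
Qed.

Lemma sum_capped_share (B : R) (n : nat) : 0 <= B ->
  \sum_(0 <= j < n) capped_share B j = Num.min (n%:R * P) B.
Proof.
move=> B_ge0; elim: n => [|n IHn]; first by rewrite big_geq // mul0r min_l.
by rewrite big_nat_recr //= IHn min_add_capped_share -natr1 mulrDl mul1r.
Qed.

Variables (A E : R).
Hypotheses (A_ge0 : 0 <= A) (A_le_E : A <= E).

Lemma share_gapE m tau : (tau <= m)%N -> share_gap A E m tau =
  Num.min (m%:R * P) A - Num.min (tau%:R * P) A - Num.min ((m.-1 - tau)%:R * P) E.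
Proof.
move=> tau_m; have E_ge0 := le_trans A_ge0 A_le_E.
rewrite /share_gap -!sum_capped_share // (big_cat_nat (leq0n tau) tau_m) /=; ring.
Qed.

Lemma share_gap_antitone i k m : (i < k <= m)%N -> share_gap A E m i <= share_gap A E k i.
Proof.
case/andP=> ik km; have im := ltnW (leq_trans ik km).
rewrite (share_gapE _ _ im) (share_gapE _ _ (ltnW ik)).
have -> : m%:R * P = k%:R * P + (m - k)%:R * P by rewrite -mulrDl -natrD subnKC.
have -> : (m.-1 - i)%:R * P = (k.-1 - i)%:R * P + (m - k)%:R * P.
  by rewrite -mulrDl -natrD; congr (_%:R * _); lia.
have d_ge0 : 0 <= (m - k)%:R * P := mulr_ge0 (ler0n _ _) P_ge0.
have shift : (k.-1 - i)%:R * P <= k%:R * P by apply: ler_wpM2r => //; rewrite ler_nat; lia.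
have := min_increment_le _ _ _ _ _ d_ge0 shift A_le_E; lra.
Qed.

End CappedShares.

Arguments capped_share {R} P B j.
Arguments share_gap {R} P A E m tau.

Section CappedShareBound.

Variables (R : realFieldType) (P A E : R) (g x : nat -> R) (N : nat).
Hypotheses (P_ge0 : 0 <= P) (A_le_E : A <= E).
Hypotheses (g_le : forall tau, (tau < N)%N -> g tau <= Num.min P (x tau.+1 - x tau))
  (rise_le_A : forall b, (b <= N)%N -> x b - x 0 <= A)
  (rise_le_E : forall a b, (a <= b <= N)%N -> x b - x a <= E).

Let A_ge0 : 0 <= A.
Proof. by have := @rise_le_A 0 (leq0n N); rewrite subrr. Qed.

Let sum_g_le a b : (a <= b <= N)%N ->
  \sum_(a <= tau < b) g tau <= Num.min ((b - a)%:R * P) (x b - x a).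
Proof.
case/andP=> ab bN; rewrite le_min; apply/andP; split.
  rewrite mulr_natl -sumr_const_nat; apply: ler_sum_nat => i /andP[_ ib].
  by have := g_le i (leq_trans ib bN); rewrite le_min => /andP[].
rewrite -telescope_sumr //; apply: ler_sum_nat => i /andP[_ ib].
by have := g_le i (leq_trans ib bN); rewrite le_min => /andP[].
Qed.

Lemma partial_sum_max_gap_le k m : (k <= m <= N)%N ->
  \sum_(0 <= tau < k) Num.max (g tau) (share_gap P A E m tau) + \sum_(k <= tau < m) g tau
    <= Num.min (m%:R * P) A.
Proof.
elim: k m => [|k IHk] m /andP[km mN].
  rewrite big_geq // add0r; have := @sum_g_le 0 m; rewrite mN subn0 => /(_ isT).
  rewrite !le_min => /andP[-> h]; apply: le_trans h _; exact: rise_le_A.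
rewrite big_nat_recr //= -addrA.
case: (leP (share_gap P A E m k) (g k)) => [_|gk_lt].
  by rewrite -big_ltn //; apply: IHk; rewrite ltnW.
have kN : (k <= N)%N := leq_trans (ltnW km) mN.
have prefix_k :
    \sum_(0 <= tau < k) Num.max (g tau) (share_gap P A E k tau) <= Num.min (k%:R * P) A.
  by have := IHk k; rewrite leqnn kN [X in _ + X]big_geq // addr0; apply.
have head : \sum_(0 <= tau < k) Num.max (g tau) (share_gap P A E m tau)
    <= \sum_(0 <= tau < k) Num.max (g tau) (share_gap P A E k tau).
  apply: ler_sum_nat => i /andP[_ ik]; apply: le_max2 => //.
  by apply: share_gap_antitone => //; rewrite ik ltnW.
have tail : \sum_(k.+1 <= tau < m) g tau <= Num.min ((m.-1 - k)%:R * P) E.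
  have := @sum_g_le k.+1 m; rewrite km mN => /(_ isT).
  rewrite !le_min => /andP[h1 h2]; apply/andP; split.
    by have -> : (m.-1 - k = m - k.+1)%N by lia.
  by apply: le_trans h2 (rise_le_E _ _ _); rewrite km mN.
by rewrite share_gapE ?A_ge0 ?(ltnW km) // in gk_lt *; lra.
Qed.

Lemma sum_max_share_gap_le :
  \sum_(0 <= tau < N) Num.max (g tau) (share_gap P A E N tau)
    <= \sum_(0 <= j < N) capped_share P A j.
Proof.
have := @partial_sum_max_gap_le N N; rewrite leqnn [X in _ + X]big_geq // addr0.
by rewrite sum_capped_share ?A_ge0 //; apply.
Qed.

End CappedShareBound.

Arguments sum_max_share_gap_le {R P A E g x N}.

Section StorageModel.

Context {R : realFieldType} {T : nat} {Delta etac etad Pd Pc Smin Smax s0 : R}.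
Context {pd pc s : nat -> R} {u : nat -> bool}.
Hypotheses (Delta_gt0 : 0 < Delta) (etac_gt0 : 0 < etac) (etad_gt0 : 0 < etad).
Hypotheses (Pd_ge0 : 0 <= Pd) (Pc_ge0 : 0 <= Pc) (s0_bounds : Smin <= s0 <= Smax).
Hypothesis feasible : inP01 T Delta etac etad Pc Pd Smin Smax s0 pd pc s u.

Local Notation Pd_e := (Pde Delta etad Pd Smin Smax).
Local Notation Pc_e := (Pce Delta etac Pc Smin Smax).
Local Notation slow := (slow0 Delta etad Pd Smin Smax s0).
Local Notation sup := (sup0 Delta etac Pc Smin Smax s0).
Local Notation c := (cc Delta etac etad Pc Pd Smin Smax s0).
Local Notation d := (dd Delta etac etad Pc Pd Smin Smax s0).

Lemma state_bounds k : (k <= T)%N -> Smin <= s k <= Smax.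
Proof.
case: feasible => s_0 step; case: k => [|k] kT; first by rewrite s_0.
by have [_ [_ [_ [_ [_ []]]]]] := step k.+1 kT.
Qed.

Lemma idle_charge k : (1 <= k <= T)%N -> ~~ u k ->
  pc k = 0 /\ Delta * pd k = etad * (s k.-1 - s k).
Proof.
move=> kT /negbTE uk; have [_ [pc_ge0 [_ [_ [+ [_ ->]]]]]] := feasible.2 k kT.
rewrite uk mulr0 => pc_le0; have pc0 : pc k = 0 by apply/le_anti/andP.
by split=> //; rewrite pc0; field; rewrite lt0r_neq0.
Qed.

Lemma idle_discharge k : (1 <= k <= T)%N -> u k ->
  pd k = 0 /\ Delta * etac * pc k = s k - s k.-1.
Proof.
move=> kT uk; have [pd_ge0 [_ [_ [+ [_ [_ ->]]]]]] := feasible.2 k kT.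
rewrite uk subrr mulr0 => pd_le0; have pd0 : pd k = 0 by apply/le_anti/andP.
by split=> //; rewrite pd0; field; rewrite lt0r_neq0.
Qed.

Lemma Pde_ge0 : 0 <= Pd_e.
Proof.
have /andP[lo hi] := s0_bounds.
rewrite le_min Pd_ge0 divr_ge0 ?mulr_ge0 ?subr_ge0 ?(le_trans lo hi) ?ltW //.
Qed.

Lemma Pce_ge0 : 0 <= Pc_e.
Proof.
have /andP[lo hi] := s0_bounds.
rewrite le_min Pc_ge0 divr_ge0 ?mulr_ge0 ?subr_ge0 ?(le_trans lo hi) ?ltW //.
Qed.

Lemma pd_le_Pde k : (1 <= k <= T)%N -> pd k <= Pd_e.
Proof.
move=> kT; case: (boolP (u k)) => uk.
  by rewrite (idle_discharge k kT uk).1 Pde_ge0.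
have [_ balance] := idle_charge k kT uk.
have [_ [_ [_ [+ _]]]] := feasible.2 k kT; rewrite (negbTE uk) subr0 mulr1 => pd_le.
have /andP[_ hi] := state_bounds k.-1 (leq_trans (leq_pred k) (proj2 (andP kT))).
have /andP[lo _] := state_bounds k (proj2 (andP kT)).
rewrite le_min pd_le ler_pdivlMr // mulrC balance ler_pM2l //; lra.
Qed.

Lemma pc_le_Pce k : (1 <= k <= T)%N -> pc k <= Pc_e.
Proof.
move=> kT; case: (boolP (u k)) => uk; last by rewrite (idle_charge k kT uk).1 Pce_ge0.
have [_ balance] := idle_discharge k kT uk.
have [_ [_ [_ [_ [+ _]]]]] := feasible.2 k kT; rewrite uk mulr1 => pc_le.
have /andP[lo _] := state_bounds k.-1 (leq_trans (leq_pred k) (proj2 (andP kT))).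
have /andP[_ hi] := state_bounds k (proj2 (andP kT)).
rewrite le_min pc_le ler_pdivlMr ?mulr_gt0 // mulrC balance; lra.
Qed.

Lemma slow0_le_state k : (k <= T)%N -> Smin <= slow k <= s k.
Proof.
have /andP[lo0 _] := s0_bounds.
elim: k => [|k IHk] kT; first by rewrite /= feasible.1 lexx andbT.
have k1T : (1 <= k.+1 <= T)%N by rewrite kT.
have /andP[_ slow_le] := IHk (ltnW kT).
have [_ [pc_ge0 [_ [_ [_ [/andP[lo _] step]]]]]] := feasible.2 _ k1T.
have loss : Delta * pd k.+1 / etad <= Delta * Pd_e / etad.
  by rewrite ler_pM2r ?invr_gt0 // ler_pM2l // pd_le_Pde.
have gain : 0 <= Delta * etac * pc k.+1.
  by rewrite mulr_ge0 // mulr_ge0 // ltW.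
rewrite /= le_max lexx orbT ge_max lo andbT; rewrite mulrBr !mulrA in step; lra.
Qed.

Lemma state_le_sup0 k : (k <= T)%N -> s k <= sup k <= Smax.
Proof.
have /andP[_ hi0] := s0_bounds.
elim: k => [|k IHk] kT; first by rewrite /= feasible.1 lexx.
have k1T : (1 <= k.+1 <= T)%N by rewrite kT.
have /andP[le_sup _] := IHk (ltnW kT).
have [pd_ge0 [_ [_ [_ [_ [/andP[_ hi] step]]]]]] := feasible.2 _ k1T.
have gain : Delta * etac * pc k.+1 <= Delta * etac * Pc_e.
  by rewrite ler_pM2l ?mulr_gt0 // pc_le_Pce.
have loss : 0 <= Delta * pd k.+1 / etad.
  by rewrite divr_ge0 ?mulr_ge0 // ltW.
rewrite /= ge_min lexx orbT andbT le_min hi andbT; rewrite mulrBr !mulrA in step; lra.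
Qed.

Lemma pd_le_dd0 k : (1 <= k <= T)%N -> pd k <= d k 0.
Proof.
move=> kT; have kT' := proj2 (andP kT); have k'T := leq_trans (leq_pred k) kT'.
have /andP[lo _] := state_bounds k kT'; have /andP[lo' _] := state_bounds k.-1 k'T.
have /andP[s_le_sup _] := state_le_sup0 k.-1 k'T.
rewrite /dd mul0r subr0 le_min pd_le_Pde //= /pospart le_max ler_pdivlMr //.
apply/orP; left; case: (boolP (u k)) => uk.
  rewrite (idle_discharge k kT uk).1 mul0r mulr_ge0 ?(ltW etad_gt0) //.
  by rewrite subr_ge0 (le_trans lo').
rewrite mulrC (idle_charge k kT uk).2 [etad * _]mulrC ler_pM2r //; lra.
Qed.

Lemma pc_le_cc0 k : (1 <= k <= T)%N -> pc k <= c k 0.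
Proof.
move=> kT; have kT' := proj2 (andP kT); have k'T := leq_trans (leq_pred k) kT'.
have /andP[_ hi] := state_bounds k kT'; have /andP[_ hi'] := state_bounds k.-1 k'T.
have /andP[_ slow_le] := slow0_le_state k.-1 k'T.
rewrite /cc mul0r subr0 le_min pc_le_Pce //= /pospart le_max ler_pdivlMr ?mulr_gt0 //.
apply/orP; left; case: (boolP (u k)) => uk.
  by rewrite mulrC (idle_discharge k kT uk).2; lra.
by rewrite (idle_charge k kT uk).1 mul0r subr_ge0 (le_trans slow_le hi').
Qed.

Lemma charge_gain_le k : (1 <= k <= T)%N ->
  (if u k then pc k else - d k 0 / (etad * etac))
    <= Num.min Pc_e ((s k - s k.-1) / (Delta * etac)).
Proof.
move=> kT; case: ifP => uk; rewrite le_min.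
  have [_ balance] := idle_discharge k kT uk.
  by rewrite pc_le_Pce //= ler_pdivlMr ?mulr_gt0 // mulrC balance.
have [_ balance] := idle_charge k kT (negbT uk).
have d_ge0 : 0 <= d k 0.
  by apply: le_trans (pd_le_dd0 k kT); case: feasible => _ /(_ k kT)[].
have drop : s k - s k.-1 = - (Delta * pd k) / etad.
  by rewrite balance; field; exact: lt0r_neq0.
have -> : (s k - s k.-1) / (Delta * etac) = - pd k / (etad * etac).
  by rewrite drop; field; rewrite !lt0r_neq0.
rewrite ler_pM2r ?invr_gt0 ?mulr_gt0 // lerN2 pd_le_dd0 // andbT.
apply: (le_trans _ Pce_ge0).
by rewrite mulNr oppr_le0 divr_ge0 // mulr_ge0 // ltW.
Qed.

Lemma discharge_gain_le k : (1 <= k <= T)%N ->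
  (if u k then - (etad * etac) * c k 0 else pd k)
    <= Num.min Pd_e ((s k.-1 - s k) * etad / Delta).
Proof.
move=> kT; case: ifP => uk; rewrite le_min; last first.
  have [_ balance] := idle_charge k kT (negbT uk).
  by rewrite pd_le_Pde //= ler_pdivlMr // mulrC balance mulrC.
have [_ balance] := idle_discharge k kT uk.
have c_ge0 : 0 <= c k 0.
  by apply: le_trans (pc_le_cc0 k kT); case: feasible => _ /(_ k kT)[_ []].
have -> : (s k.-1 - s k) * etad / Delta = - (etad * etac) * pc k.
  by rewrite -opprB -balance; field; exact: lt0r_neq0.
rewrite !mulNr lerN2 ler_pM2l ?mulr_gt0 // pc_le_cc0 // andbT.
apply: (le_trans _ Pde_ge0).
by rewrite oppr_le0 mulr_ge0 // mulr_ge0 // ltW.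
Qed.

Lemma charge_window_le t n : (1 <= t)%N -> (t + n <= T)%N ->
  \sum_(0 <= tau < n.+1) pc (t + tau)%N
    + \sum_(0 <= tau < n.+1)
        rhoc Delta etac etad Pc Pd Smin Smax s0 t tau n * (1 - (u (t + tau)%N)%:R)
  <= \sum_(0 <= tau < n.+1) c t tau.
Proof.
case: t => [|t] // _ tnT.
have kT k : (k <= n.+1)%N -> (t + k <= T)%N by move: tnT; lia.
have step tau : (tau < n.+1)%N -> (1 <= t.+1 + tau <= T)%N by move: tnT; lia.
have scale_gt0 : 0 < (Delta * etac)^-1 by rewrite invr_gt0 mulr_gt0.
pose g tau := if u (t.+1 + tau)%N then pc (t.+1 + tau)%N
              else - d (t.+1 + tau)%N 0 / (etad * etac).
pose x k := s (t + k)%N / (Delta * etac).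
have tT : (t <= T)%N by move: tnT; lia.
have /andP[slow_lo slow_le] := slow0_le_state t tT.
have A_le_E : (Smax - slow t) / (Delta * etac) <= (Smax - Smin) / (Delta * etac).
  by rewrite ler_pM2r //; lra.
have g_le tau : (tau < n.+1)%N -> g tau <= Num.min Pc_e (x tau.+1 - x tau).
  by move=> /step; move/charge_gain_le; rewrite addSn /= -mulrBl addnS.
have rise_A b : (b <= n.+1)%N -> x b - x 0%N <= (Smax - slow t) / (Delta * etac).
  move=> /kT /(state_bounds _) /andP[_ hi]; rewrite -mulrBl addn0 ler_pM2r //; lra.
have rise_E a b : (a <= b <= n.+1)%N -> x b - x a <= (Smax - Smin) / (Delta * etac).
  case/andP=> ab /kT bT; have /andP[_ hi] := state_bounds _ bT.
  have /andP[lo _] := state_bounds _ (leq_trans (leq_add (leqnn t) ab) bT).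
  rewrite -mulrBl ler_pM2r //; lra.
have key := sum_max_share_gap_le Pce_ge0 A_le_E g_le rise_A rise_E.
apply: (le_trans _ key).
rewrite -big_split /=; apply: ler_sum_nat => tau /andP[_ taun]; rewrite /g.
case: ifP => utau; first by rewrite subrr mulr0 addr0 le_max lexx.
by rewrite (idle_charge _ (step _ taun) (negbT utau)).1 subr0 mulr1 add0r.
Qed.

Lemma discharge_window_le t n : (1 <= t)%N -> (t + n <= T)%N ->
  \sum_(0 <= tau < n.+1) pd (t + tau)%N
    + \sum_(0 <= tau < n.+1)
        rhod Delta etac etad Pc Pd Smin Smax s0 t tau n * (u (t + tau)%N)%:R
  <= \sum_(0 <= tau < n.+1) d t tau.
Proof.
case: t => [|t] // _ tnT.
have kT k : (k <= n.+1)%N -> (t + k <= T)%N by move: tnT; lia.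
have step tau : (tau < n.+1)%N -> (1 <= t.+1 + tau <= T)%N by move: tnT; lia.
have scale_gt0 : 0 < Delta^-1 by rewrite invr_gt0.
pose g tau := if u (t.+1 + tau)%N then - (etad * etac) * c (t.+1 + tau)%N 0
              else pd (t.+1 + tau)%N.
pose x k := - s (t + k)%N * etad / Delta.
have tT : (t <= T)%N by move: tnT; lia.
have /andP[le_sup sup_hi] := state_le_sup0 t tT.
have A_le_E : (sup t - Smin) * etad / Delta <= (Smax - Smin) * etad / Delta.
  by rewrite !ler_pM2r //; lra.
have scaled_drop a b : - a * etad / Delta - - b * etad / Delta = (b - a) * etad / Delta.
  by ring.
have g_le tau : (tau < n.+1)%N -> g tau <= Num.min Pd_e (x tau.+1 - x tau).
  by move=> /step; move/discharge_gain_le; rewrite addSn /= /x addnS scaled_drop.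
have rise_A b : (b <= n.+1)%N -> x b - x 0%N <= (sup t - Smin) * etad / Delta.
  move=> /kT /(state_bounds _) /andP[lo _]; rewrite -!mulrBl !ler_pM2r // addn0; lra.
have rise_E a b : (a <= b <= n.+1)%N -> x b - x a <= (Smax - Smin) * etad / Delta.
  case/andP=> ab /kT bT; have /andP[lo _] := state_bounds _ bT.
  have /andP[_ hi] := state_bounds _ (leq_trans (leq_add (leqnn t) ab) bT).
  rewrite -!mulrBl !ler_pM2r //; lra.
have key := sum_max_share_gap_le Pde_ge0 A_le_E g_le rise_A rise_E.
apply: (le_trans _ key).
rewrite -big_split /=; apply: ler_sum_nat => tau /andP[_ taun]; rewrite /g.
case: ifP => utau; last by rewrite mulr0 addr0 le_max lexx.
by rewrite (idle_discharge _ (step _ taun) utau).1 mulr1 add0r.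
Qed.

End StorageModel.

Theorem mainTheorem6 (R : realFieldType) (T : nat)
    (Delta etac etad Pd Pc Smin Smax s0 : R)
    (hT : (1 <= T)%N) (hDelta : 0 < Delta)
    (hetac : 0 < etac <= 1) (hetad : 0 < etad <= 1)
    (hPd : 0 < Pd) (hPc : 0 < Pc) (hS : Smin < Smax) (hs0 : Smin <= s0 <= Smax)
    (t taub : nat) (ht : (1 <= t <= T)%N) (htaub : (taub <= T - t)%N)
    (pd pc s : nat -> R) (u : nat -> bool)
    (hP : inP01 T Delta etac etad Pc Pd Smin Smax s0 pd pc s u) :
  \sum_(0 <= tau < taub.+1) pc (t + tau)%N
    + \sum_(0 <= tau < taub.+1)
        rhoc Delta etac etad Pc Pd Smin Smax s0 t tau taub * (1 - (u (t + tau)%N)%:R)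
  <= \sum_(0 <= tau < taub.+1) cc Delta etac etad Pc Pd Smin Smax s0 t tau
  /\
  \sum_(0 <= tau < taub.+1) pd (t + tau)%N
    + \sum_(0 <= tau < taub.+1)
        rhod Delta etac etad Pc Pd Smin Smax s0 t tau taub * (u (t + tau)%N)%:R
  <= \sum_(0 <= tau < taub.+1) dd Delta etac etad Pc Pd Smin Smax s0 t tau.
Proof.
have /andP[etac_gt0 _] := hetac; have /andP[etad_gt0 _] := hetad.
have [Pd_ge0 Pc_ge0] := (ltW hPd, ltW hPc).
have /andP[t_ge1 tT] := ht; have window_T : (t + taub <= T)%N by move: htaub tT; lia.
split; first exact: (charge_window_le _ _ _ _ _ _ hP).
exact: (discharge_window_le _ _ _ _ _ _ hP).
Qed.
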